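(* For every $x\in(0,1)$, $\ \Gamma(x,1-x)\ \ge\ e^{-\Gamma'(1)}$.
   Context: For $x>0,y>0$ the Bigamma function is the (convergent) improper integral $\Gamma(x,y):=\int_0^1(-\ln t)^{x-1}\big(-\ln(1-t)\big)^{y-1}\,dt$. $\Gamma'(1)$ is the derivative at $1$ of Euler's gamma function. *)

From Stdlib Require Import Reals.
From Coquelicot Require Import Coquelicot.
Open Scope R_scope.

Definition EulerGamma (x : R) : R :=
  RInt_gen (fun t => Rpower t (x - 1) * exp (- t))
           (at_right 0) (Rbar_locally p_infty).

Definition Bigamma (x y : R) : R :=
  RInt_gen (fun t => Rpower (- ln t) (x - 1) * Rpower (- ln (1 - t)) (y - 1))
           (at_right 0) (at_left 1).

From Stdlib Require Import Reals Lra Psatz.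
From Coquelicot Require Import Coquelicot.
Open Scope R_scope.

(* With [a = - ln t] and [b = - ln (1 - t)], the integrand of [Bigamma x (1 - x)]
   is [exp ((x - 1) ln a - x ln b)].  The tangent-line bounds
   [ln u <= (u ^ h - 1) / h] and [exp s >= exp c * (1 + s - c)] bound it below by
   an affine function of [a ^ h] and [b ^ h], and the substitutions [s = a],
   [s = b] show that both of these integrate to [EulerGamma (1 + h)] over (0, 1).
   Choosing [c = - (EulerGamma (1 + h) - 1) / h] yields
   [Bigamma x (1 - x) >= exp (- (EulerGamma (1 + h) - EulerGamma 1) / h)] for all
   [h] in (0, 1].  These difference quotients are also at most [1], since
   [t ^ h <= 1 + h (t ^ 2 - t)]; as Coquelicot defines [Derive EulerGamma 1] from
   the quotients at [h = / (n + 1)], it obeys the same bound, and no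
   differentiability of [EulerGamma] has to be proved. *)

Lemma ball_R_iff (x e y : R) : ball x e y <-> Rabs (y - x) < e.
Proof. reflexivity. Qed.

Lemma ball_R_lt (x e y : R) : ball x e y -> x - e < y < x + e.
Proof. intros H. destruct (Rabs_def2 _ _ (proj1 (ball_R_iff x e y) H)). lra. Qed.

Lemma continuous_of_ex_derive (f : R -> R) x : ex_derive f x -> continuous f x.
Proof. exact (ex_derive_continuous (K := R_AbsRing) (V := R_NormedModule) f x). Qed.

Lemma exp_le_exp_of_le a b : a <= b -> exp a <= exp b.
Proof. intros [Hab | ->]; [left; now apply exp_increasing | apply Rle_refl]. Qed.

(** * Improper integrals *)

Definition is_interval (I : R -> Prop) :=
  forall a b y, I a -> I b -> Rmin a b <= y <= Rmax a b -> I y.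

Lemma filter_prod_interval {Fa Fb : (R -> Prop) -> Prop}
    {FFa : Filter Fa} {FFb : Filter Fb} (I : R -> Prop) :
  is_interval I -> Fa I -> Fb I ->
  filter_prod Fa Fb
    (fun ab => forall y, Rmin (fst ab) (snd ab) <= y <= Rmax (fst ab) (snd ab) -> I y).
Proof.
  intros HI Ha Hb. exists I I; auto. intros a b Ia Ib y Hy. exact (HI a b y Ia Ib Hy).
Qed.

Lemma is_RInt_gen_filterlim {Fa Fb : (R -> Prop) -> Prop}
    {FFa : Filter Fa} {FFb : Filter Fb} (f : R -> R) l :
  is_RInt_gen f Fa Fb l ->
  filter_prod Fa Fb (fun ab => ex_RInt f (fst ab) (snd ab)) /\
  filterlim (fun ab => RInt f (fst ab) (snd ab)) (filter_prod Fa Fb) (locally l).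
Proof.
  intros H. split.
  - assert (Htrue := H (fun _ => True) filter_true). unfold filtermapi in Htrue.
    revert Htrue. apply filter_imp. intros ab [y [Hy _]]. now exists y.
  - intros P HP. assert (HPl := H P HP). unfold filtermapi in HPl.
    unfold filtermap. revert HPl. apply filter_imp.
    intros ab [y [Hy Py]]. now rewrite (is_RInt_unique _ _ _ _ Hy).
Qed.

Lemma filterlim_is_RInt_gen {Fa Fb : (R -> Prop) -> Prop}
    {FFa : Filter Fa} {FFb : Filter Fb} (f : R -> R) l :
  filter_prod Fa Fb (fun ab => ex_RInt f (fst ab) (snd ab)) ->
  filterlim (fun ab => RInt f (fst ab) (snd ab)) (filter_prod Fa Fb) (locally l) ->
  is_RInt_gen f Fa Fb l.
Proof.
  intros Hex Hlim P HP. unfold filtermapi.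
  assert (HPl := Hlim P HP). unfold filtermap in HPl.
  generalize (filter_and _ _ Hex HPl). apply filter_imp.
  intros ab [He Hp]. exists (RInt f (fst ab) (snd ab)).
  split; [apply (RInt_correct f); exact He | exact Hp].
Qed.

Lemma ex_RInt_interval (f : R -> R) (I : R -> Prop) a b :
  is_interval I -> (forall y, I y -> continuous f y) -> I a -> I b -> ex_RInt f a b.
Proof.
  intros HI Hc Ha Hb. apply (ex_RInt_continuous (V := R_CompleteNormedModule)).
  intros y Hy. exact (Hc y (HI a b y Ha Hb Hy)).
Qed.

Lemma Rabs_RInt_le_Rabs_RInt (f g : R -> R) a b :
  (forall y, Rmin a b <= y <= Rmax a b -> 0 <= f y <= g y) ->
  ex_RInt f a b -> ex_RInt g a b -> Rabs (RInt f a b) <= Rabs (RInt g a b).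
Proof.
  assert (Ordered : forall u v, u <= v -> (forall y, u <= y <= v -> 0 <= f y <= g y) ->
            ex_RInt f u v -> ex_RInt g u v -> Rabs (RInt f u v) <= Rabs (RInt g u v)).
  { intros u v Huv Hfg Ef Eg.
    assert (0 <= RInt f u v) by (apply RInt_ge_0; auto; intros y Hy; apply Hfg; lra).
    assert (RInt f u v <= RInt g u v) by (apply RInt_le; auto; intros y Hy; apply Hfg; lra).
    rewrite !Rabs_right; lra. }
  intros Hfg Ef Eg. destruct (Rle_lt_dec a b) as [Hab | Hba].
  - apply Ordered; auto. intros y Hy. apply Hfg. rewrite Rmin_left, Rmax_right; lra.
  - rewrite <- (opp_RInt_swap f b a), <- (opp_RInt_swap g b a) by (now apply ex_RInt_swap).
    unfold opp; simpl; rewrite !Rabs_Ropp.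
    apply Ordered; try (now apply ex_RInt_swap); [lra|].
    intros y Hy. apply Hfg. rewrite Rmin_right, Rmax_left; lra.
Qed.

(* Chasles turns the difference of two partial integrals of [f] into the
   integrals over the two "end pieces", which are controlled by those of [g]. *)
Lemma Rabs_RInt_sub_le (f g : R -> R) (I : R -> Prop) a b a' b' :
  is_interval I -> (forall y, I y -> 0 <= f y <= g y /\ continuous f y /\ continuous g y) ->
  I a -> I b -> I a' -> I b' ->
  Rabs (RInt f a' b' - RInt f a b)
    <= Rabs (RInt g a b - RInt g a' b) + Rabs (RInt g a' b - RInt g a' b').
Proof.
  intros HI Hfg Ia Ib Ia' Ib'.
  assert (Ex : forall h u v, (forall y, I y -> continuous h y) -> I u -> I v -> ex_RInt h u v)
    by (intros; eapply ex_RInt_interval; eauto).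
  assert (Ef : forall u v, I u -> I v -> ex_RInt f u v) by (intros; apply Ex; auto; apply Hfg).
  assert (Eg : forall u v, I u -> I v -> ex_RInt g u v) by (intros; apply Ex; auto; apply Hfg).
  assert (Piece : forall u v, I u -> I v -> Rabs (RInt f u v) <= Rabs (RInt g u v)).
  { intros u v Iu Iv. apply Rabs_RInt_le_Rabs_RInt; auto.
    intros y Hy. apply Hfg, (HI u v y Iu Iv Hy). }
  assert (Xf1 := RInt_Chasles f a a' b (Ef _ _ Ia Ia') (Ef _ _ Ia' Ib)).
  assert (Xf2 := RInt_Chasles f a' b' b (Ef _ _ Ia' Ib') (Ef _ _ Ib' Ib)).
  assert (Xg1 := RInt_Chasles g a a' b (Eg _ _ Ia Ia') (Eg _ _ Ia' Ib)).
  assert (Xg2 := RInt_Chasles g a' b' b (Eg _ _ Ia' Ib') (Eg _ _ Ib' Ib)).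
  unfold plus in *; simpl in *.
  replace (RInt f a' b' - RInt f a b) with (- (RInt f a a' + RInt f b' b)) by lra.
  replace (RInt g a b - RInt g a' b) with (RInt g a a') by lra.
  replace (RInt g a' b - RInt g a' b') with (RInt g b' b) by lra.
  rewrite Rabs_Ropp. eapply Rle_trans; [apply Rabs_triang|].
  apply Rplus_le_compat; auto.
Qed.

Lemma ex_RInt_gen_dominated {Fa Fb : (R -> Prop) -> Prop}
    {PFa : ProperFilter Fa} {PFb : ProperFilter Fb}
    (f g : R -> R) (I : R -> Prop) :
  is_interval I -> Fa I -> Fb I ->
  (forall y, I y -> 0 <= f y <= g y /\ continuous f y /\ continuous g y) ->
  ex_RInt_gen g Fa Fb -> ex_RInt_gen f Fa Fb.
Proof.
  intros HI Ha Hb Hfg [lg Hg]. apply is_RInt_gen_filterlim in Hg as [_ Hg].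
  assert (II : filter_prod Fa Fb (fun ab => I (fst ab) /\ I (snd ab))) by (exists I I; auto).
  assert (Hcauchy : exists l,
    filterlim (fun ab => RInt f (fst ab) (snd ab)) (filter_prod Fa Fb) (locally l)).
  { apply filterlim_locally_cauchy. intros eps.
    assert (He : 0 < eps / 4) by (destruct eps; simpl; lra).
    destruct (filter_and _ _ (proj1 (filterlim_locally _ _) Hg (mkposreal _ He)) II)
      as [Q S HQ HS HQS].
    exists (fun ab => Q (fst ab) /\ S (snd ab)). split; [now exists Q S|].
    intros [a b] [a' b'] [Qa Sb] [Qa' Sb']; simpl in *.
    destruct (HQS a b Qa Sb) as [B1 [Ia Ib]].
    destruct (HQS a' b' Qa' Sb') as [B2 [Ia' Ib']].
    destruct (HQS a' b Qa' Sb) as [B3 _].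
    apply ball_R_lt in B1, B2, B3; simpl in *.
    apply ball_R_iff. eapply Rle_lt_trans; [apply (Rabs_RInt_sub_le f g I); eauto|].
    assert (Rabs (RInt g a b - RInt g a' b) < eps / 2) by (apply Rabs_def1; lra).
    assert (Rabs (RInt g a' b - RInt g a' b') < eps / 2) by (apply Rabs_def1; lra).
    lra. }
  destruct Hcauchy as [l Hl]. exists l. apply filterlim_is_RInt_gen; [|exact Hl].
  generalize II; apply filter_imp. intros [a b] [Ia Ib].
  apply (ex_RInt_interval f I); auto. intros y Iy. apply Hfg, Iy.
Qed.

Lemma is_RInt_gen_comp {Fa Fb Ga Gb : (R -> Prop) -> Prop} {FFa : Filter Fa} {FFb : Filter Fb}
    {FGa : Filter Ga} {FGb : Filter Gb} (f phi dphi : R -> R) (I : R -> Prop) l :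
  is_interval I -> Fa I -> Fb I ->
  (forall y, I y -> is_derive phi y (dphi y) /\ continuous dphi y /\ continuous f (phi y)) ->
  filterlim phi Fa Ga -> filterlim phi Fb Gb ->
  is_RInt_gen f Ga Gb l -> is_RInt_gen (fun y => dphi y * f (phi y)) Fa Fb l.
Proof.
  intros HI Ha Hb Hd La Lb Hf. apply is_RInt_gen_filterlim in Hf as [_ Hf].
  assert (Hpiece : forall a b, I a -> I b ->
    is_RInt (fun y => dphi y * f (phi y)) a b (RInt f (phi a) (phi b))).
  { intros a b Ia Ib. apply (is_RInt_comp (V := R_CompleteNormedModule) f phi dphi a b);
      intros y Hy; destruct (Hd y (HI a b y Ia Ib Hy)) as [? [? ?]]; auto. }
  assert (II : filter_prod Fa Fb (fun ab => I (fst ab) /\ I (snd ab))) by (exists I I; auto).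
  apply filterlim_is_RInt_gen.
  - generalize II; apply filter_imp. intros [a b] [Ia Ib]. eexists; now apply Hpiece.
  - apply filterlim_ext_loc with (f := fun ab => RInt f (phi (fst ab)) (phi (snd ab))).
    + generalize II; apply filter_imp. intros [a b] [Ia Ib]; simpl.
      symmetry; now apply is_RInt_unique, Hpiece.
    + apply (filterlim_comp _ _ _ (fun ab : R * R => (phi (fst ab), phi (snd ab)))
              (fun p : R * R => RInt f (fst p) (snd p)) _ (filter_prod Ga Gb)); [|exact Hf].
      apply filterlim_pair.
      * eapply filterlim_comp; [apply filterlim_fst | exact La].
      * eapply filterlim_comp; [apply filterlim_snd | exact Lb].
Qed.

Lemma is_RInt_gen_le {Fa Fb : (R -> Prop) -> Prop} {PFa : ProperFilter Fa} {PFb : ProperFilter Fb}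
    (f g : R -> R) (I : R -> Prop) c lf lg :
  is_interval I -> Fa I -> Fb I -> Fa (fun a => a <= c) -> Fb (fun b => c <= b) ->
  (forall x, I x -> f x <= g x) ->
  is_RInt_gen f Fa Fb lf -> is_RInt_gen g Fa Fb lg -> lf <= lg.
Proof.
  intros HI Ha Hb Hac Hcb Hfg Hf Hg.
  assert (Hord : filter_prod Fa Fb (fun ab => fst ab <= snd ab)).
  { exists (fun a => a <= c) (fun b => c <= b); auto. simpl; intros; lra. }
  assert (Hm := is_RInt_gen_minus _ _ _ _ Hg Hf).
  assert (Hnorm : norm (minus lg lf) <= minus lg lf).
  { apply (RInt_gen_norm (V := R_CompleteNormedModule) (fun y => minus (g y) (f y))
      (fun y => minus (g y) (f y)) (minus lg lf) (minus lg lf) Hord); [| exact Hm | exact Hm].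
    generalize (filter_and _ _ Hord (filter_prod_interval I HI Ha Hb)); apply filter_imp.
    intros ab [Hab HIab] x Hx. rewrite Rmin_left, Rmax_right in HIab by exact Hab.
    specialize (Hfg x (HIab x Hx)).
    unfold norm, minus, plus, opp; simpl; unfold abs; simpl. rewrite Rabs_right; lra. }
  unfold norm, minus, plus, opp in Hnorm; simpl in Hnorm; unfold abs in Hnorm; simpl in Hnorm.
  assert (0 <= Rabs (lg + - lf)) by apply Rabs_pos. lra.
Qed.

Lemma is_RInt_gen_antiderivative {Fa Fb : (R -> Prop) -> Prop} {FFa : Filter Fa} {FFb : Filter Fb}
    (F f : R -> R) (I : R -> Prop) la lb :
  is_interval I -> open I -> Fa I -> Fb I ->
  (forall y, I y -> is_derive F y (f y) /\ continuous f y) ->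
  filterlim F Fa (locally la) -> filterlim F Fb (locally lb) ->
  is_RInt_gen f Fa Fb (lb - la).
Proof.
  intros HI HIo Ha Hb Hd La Lb.
  assert (II := filter_prod_interval I HI Ha Hb).
  apply is_RInt_gen_ext with (f := Derive F).
  - generalize II; apply filter_imp. intros ab HIab x Hx.
    apply is_derive_unique, Hd, HIab. lra.
  - apply is_RInt_gen_Derive; auto.
    + generalize II; apply filter_imp. intros ab HIab x Hx.
      eexists; apply Hd, HIab, Hx.
    + generalize II; apply filter_imp. intros ab HIab x Hx.
      apply continuous_ext_loc with (g := f); [|apply Hd, HIab, Hx].
      generalize (HIo x (HIab x Hx)); apply filter_imp.
      intros z Iz. symmetry; now apply is_derive_unique, Hd.
Qed.

(** * One-sided limits *)

Lemma at_right_iff a (P : R -> Prop) :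
  at_right a P <-> exists d, 0 < d /\ forall t, a < t < a + d -> P t.
Proof.
  split.
  - intros [d Hd]. exists d. split; [apply cond_pos|]. intros t Ht.
    apply Hd; [apply ball_R_iff; rewrite Rabs_right|]; lra.
  - intros [d [Hd HP]]. exists (mkposreal d Hd).
    intros t Ht%ball_R_lt Hat. apply HP. simpl in Ht. lra.
Qed.

Lemma at_left_iff b (P : R -> Prop) :
  at_left b P <-> exists d, 0 < d /\ forall t, b - d < t < b -> P t.
Proof.
  split.
  - intros [d Hd]. exists d. split; [apply cond_pos|]. intros t Ht.
    apply Hd; [apply ball_R_iff; rewrite Rabs_left|]; lra.
  - intros [d [Hd HP]]. exists (mkposreal d Hd).
    intros t Ht%ball_R_lt Htb. apply HP. simpl in Ht. lra.
Qed.

Lemma at_right_open a b : a < b -> at_right a (fun t => a < t < b).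
Proof. intros Hab. apply at_right_iff. exists (b - a). split; [lra | intros; lra]. Qed.

Lemma at_left_open a b : a < b -> at_left b (fun t => a < t < b).
Proof. intros Hab. apply at_left_iff. exists (b - a). split; [lra | intros; lra]. Qed.

Lemma filterlim_at_right_of_continuous (f : R -> R) x :
  continuous f x -> filterlim f (at_right x) (locally (f x)).
Proof. intros Hf. eapply filterlim_filter_le_1; [apply filter_le_within | exact Hf]. Qed.

Lemma filterlim_at_left_of_continuous (f : R -> R) x :
  continuous f x -> filterlim f (at_left x) (locally (f x)).
Proof. intros Hf. eapply filterlim_filter_le_1; [apply filter_le_within | exact Hf]. Qed.

Lemma filterlim_one_minus_left : filterlim (fun t => 1 - t) (at_left 1) (at_right 0).
Proof.
  intros P [d [Hd HP]]%at_right_iff. apply at_left_iff.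
  exists d. split; [exact Hd|]. intros t Ht. apply HP. lra.
Qed.

Lemma filterlim_one_minus_right : filterlim (fun t => 1 - t) (at_right 0) (at_left 1).
Proof.
  intros P [d [Hd HP]]%at_left_iff. apply at_right_iff.
  exists d. split; [exact Hd|]. intros t Ht. apply HP. lra.
Qed.

Lemma filterlim_opp_ln_0 : filterlim (fun t => - ln t) (at_right 0) (Rbar_locally p_infty).
Proof. eapply filterlim_comp; [apply is_lim_ln_0 | apply (filterlim_Rbar_opp m_infty)]. Qed.

Lemma filterlim_opp_ln_1 : filterlim (fun t => - ln t) (at_left 1) (at_right 0).
Proof.
  intros P [e [He HP]]%at_right_iff. apply at_left_iff.
  assert (0 < exp (- e) < 1)
    by (split; [apply exp_pos | rewrite <- exp_0; apply exp_increasing; lra]).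
  exists (1 - exp (- e)). split; [lra|]. intros t Ht. apply HP. split.
  - assert (ln t < 0) by (rewrite <- ln_1; apply ln_increasing; lra). lra.
  - assert (- e < ln t) by (rewrite <- (ln_exp (- e)); apply ln_increasing; lra). lra.
Qed.

Lemma filterlim_Rpower_0 p : 0 < p -> filterlim (fun t => Rpower t p) (at_right 0) (locally 0).
Proof.
  intros Hp. apply filterlim_locally. intros eps. apply at_right_iff.
  assert (He : 0 < eps) by apply cond_pos.
  exists (exp (ln eps / p)). split; [apply exp_pos|]. intros t Ht.
  apply ball_R_iff. rewrite Rminus_0_r, Rabs_right by (left; apply exp_pos).
  rewrite <- (exp_ln eps) by exact He. apply exp_increasing.
  assert (ln t < ln eps / p) by (rewrite <- (ln_exp (ln eps / p)); apply ln_increasing; lra).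
  apply (Rmult_lt_compat_l p) in H; [|exact Hp]. field_simplify in H; lra.
Qed.

(** * Euler's gamma function on [1, 2] *)

Lemma is_interval_pos : is_interval (fun t => 0 < t).
Proof. intros a b y Ha Hb [Hy _]. unfold Rmin in Hy; destruct Rle_dec; lra. Qed.

Lemma at_right_0_pos : at_right 0 (fun t => 0 < t).
Proof. generalize (at_right_open 0 1 Rlt_0_1). apply filter_imp. intros; lra. Qed.

Lemma p_infty_pos : Rbar_locally p_infty (fun t => 0 < t).
Proof. now exists 0. Qed.

Definition gamma_integrand h t := Rpower t h * exp (- t).
Definition gamma_majorant h t := (1 + h * (t * t - t)) * exp (- t).
Definition gamma_majorant_primitive h t := - (1 + h * (t * t + t + 1)) * exp (- t).

(* With [y = h ln t]: [exp y - 1 <= y exp y], and [t ^ h] lies between [1] and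
   [t], so [ln t * t ^ h <= ln t * t <= (t - 1) t]. *)
Lemma Rpower_le_quadratic h t : 0 < t -> 0 <= h <= 1 -> Rpower t h <= 1 + h * (t * t - t).
Proof.
  intros Ht Hh. unfold Rpower. set (y := h * ln t).
  assert (Hy : exp y - 1 <= y * exp y).
  { generalize (exp_ineq1_le (- y)). rewrite exp_Ropp. intros H.
    assert (0 < exp y) by apply exp_pos.
    apply (Rmult_le_compat_r (exp y)) in H; [|lra].
    rewrite Rmult_plus_distr_r, Rinv_l in H by lra. lra. }
  assert (Hln : ln t * exp y <= ln t * t).
  { destruct (Rle_dec 1 t).
    - assert (0 <= ln t) by (rewrite <- ln_1; apply ln_le; lra).
      apply Rmult_le_compat_l; [lra|]. rewrite <- (exp_ln t) at 1 by exact Ht.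
      apply exp_le_exp_of_le. unfold y. nra.
    - assert (ln t < 0) by (rewrite <- ln_1; apply ln_increasing; lra).
      apply Rmult_le_compat_neg_l; [lra|]. rewrite <- (exp_ln t) at 1 by exact Ht.
      apply exp_le_exp_of_le. unfold y. nra. }
  assert (ln t <= t - 1) by (generalize (exp_ineq1_le (ln t)); rewrite exp_ln by exact Ht; lra).
  assert (h * (ln t * exp y) <= h * (ln t * t)) by (apply Rmult_le_compat_l; lra).
  assert (h * (ln t * t) <= h * ((t - 1) * t)) by (apply Rmult_le_compat_l; [lra | nra]).
  unfold y in *. nra.
Qed.

Lemma gamma_integrand_le h t : 0 < t -> 0 <= h <= 1 ->
  0 <= gamma_integrand h t <= gamma_majorant h t.
Proof.
  intros Ht Hh. unfold gamma_integrand, gamma_majorant.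
  assert (0 < exp (- t)) by apply exp_pos.
  assert (0 < Rpower t h) by apply exp_pos.
  assert (Rpower t h <= 1 + h * (t * t - t)) by now apply Rpower_le_quadratic.
  split; nra.
Qed.

(* [exp t = (exp (t / 3)) ^ 3 >= (t / 3) ^ 3]. *)
Lemma cubic_mul_exp_opp_le t : 1 <= t -> (t * t + t + 1) * t * exp (- t) <= 81.
Proof.
  intros Ht. set (E := exp (t / 3)).
  assert (HE : exp t = E * E * E) by (unfold E; rewrite <- !exp_plus; f_equal; field).
  assert (E1 : t / 3 <= E) by (unfold E; generalize (exp_ineq1_le (t / 3)); lra).
  assert (E3 : (t / 3) * (t / 3) * (t / 3) <= E * E * E).
  { apply Rmult_le_compat; try apply Rmult_le_compat; nra. }
  rewrite exp_Ropp, HE.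
  apply (Rmult_le_reg_r (E * E * E)); [nra|].
  replace ((t * t + t + 1) * t * / (E * E * E) * (E * E * E)) with ((t * t + t + 1) * t)
    by (field; nra).
  nra.
Qed.

Lemma filterlim_gamma_majorant_primitive_infty h :
  0 <= h -> filterlim (gamma_majorant_primitive h) (Rbar_locally p_infty) (locally 0).
Proof.
  intros Hh. apply filterlim_locally. intros eps.
  assert (He : 0 < eps) by apply cond_pos.
  exists (Rmax 1 (81 * (1 + h) / eps)). intros t Ht.
  assert (T1 : 1 < t) by (eapply Rle_lt_trans; [apply Rmax_l | exact Ht]).
  assert (T2 : 81 * (1 + h) / eps < t) by (eapply Rle_lt_trans; [apply Rmax_r | exact Ht]).
  apply ball_R_iff. rewrite Rminus_0_r. unfold gamma_majorant_primitive.
  assert (Hc := cubic_mul_exp_opp_le t (Rlt_le _ _ T1)).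
  assert (0 < exp (- t)) by apply exp_pos.
  set (Q := t * t + t + 1) in *.
  assert (1 <= Q) by (unfold Q; nra).
  assert (0 < 1 + h * Q) by nra.
  rewrite Rabs_left1 by nra.
  assert (81 * (1 + h) < eps * t).
  { apply (Rmult_lt_compat_l eps) in T2; [|exact He]. field_simplify in T2; lra. }
  assert ((1 + h) * (Q * exp (- t)) * t <= (1 + h) * 81) by nra.
  assert ((1 + h) * (Q * exp (- t)) < eps) by (apply (Rmult_lt_reg_r t); lra).
  nra.
Qed.

Lemma is_RInt_gen_gamma_majorant h :
  0 <= h -> is_RInt_gen (gamma_majorant h) (at_right 0) (Rbar_locally p_infty) (1 + h).
Proof.
  intros Hh. replace (1 + h) with (0 - gamma_majorant_primitive h 0)
    by (unfold gamma_majorant_primitive; rewrite Ropp_0, exp_0; ring).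
  apply (is_RInt_gen_antiderivative (gamma_majorant_primitive h) _ _ _ _ is_interval_pos
           (open_gt 0) at_right_0_pos p_infty_pos).
  - intros y _. split.
    + unfold gamma_majorant_primitive, gamma_majorant. auto_derive; [easy | ring].
    + apply continuous_of_ex_derive. unfold gamma_majorant. auto_derive. easy.
  - apply filterlim_at_right_of_continuous, continuous_of_ex_derive.
    unfold gamma_majorant_primitive. auto_derive. easy.
  - now apply filterlim_gamma_majorant_primitive_infty.
Qed.

Lemma EulerGamma_1p h :
  EulerGamma (1 + h) = RInt_gen (gamma_integrand h) (at_right 0) (Rbar_locally p_infty).
Proof. unfold EulerGamma, gamma_integrand. now replace (1 + h - 1) with h by ring. Qed.

Lemma is_RInt_gen_EulerGamma h : 0 <= h <= 1 ->
  is_RInt_gen (gamma_integrand h) (at_right 0) (Rbar_locally p_infty) (EulerGamma (1 + h)).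
Proof.
  intros Hh. rewrite EulerGamma_1p. apply (RInt_gen_correct (V := R_CompleteNormedModule)).
  apply (ex_RInt_gen_dominated _ (gamma_majorant h) _ is_interval_pos at_right_0_pos p_infty_pos).
  - intros y Hy. split; [now apply gamma_integrand_le|]. split; apply continuous_of_ex_derive.
    + unfold gamma_integrand, Rpower. auto_derive. easy.
    + unfold gamma_majorant. auto_derive. easy.
  - exists (1 + h). apply is_RInt_gen_gamma_majorant; lra.
Qed.

Lemma EulerGamma_1 : EulerGamma 1 = 1.
Proof.
  replace 1 with (1 + 0) at 1 by ring. rewrite EulerGamma_1p.
  apply (is_RInt_gen_unique (V := R_CompleteNormedModule)).
  replace 1 with (1 + 0) by ring.
  eapply is_RInt_gen_ext; [|apply is_RInt_gen_gamma_majorant, Rle_refl].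
  generalize (filter_prod_interval _ is_interval_pos at_right_0_pos p_infty_pos).
  apply filter_imp. intros ab _ x _.
  unfold gamma_integrand, gamma_majorant, Rpower. rewrite !Rmult_0_l, Rplus_0_r, exp_0. reflexivity.
Qed.

Lemma EulerGamma_1p_le h : 0 <= h <= 1 -> EulerGamma (1 + h) <= 1 + h.
Proof.
  intros Hh.
  apply (is_RInt_gen_le (gamma_integrand h) (gamma_majorant h) _ 1 _ _ is_interval_pos
           at_right_0_pos p_infty_pos).
  - generalize (at_right_open 0 1 Rlt_0_1). apply filter_imp. intros; lra.
  - exists 1. intros; lra.
  - intros t Ht. now apply gamma_integrand_le.
  - now apply is_RInt_gen_EulerGamma.
  - apply is_RInt_gen_gamma_majorant; lra.
Qed.

(** * The Bigamma integral *)

Lemma is_interval_01 : is_interval (fun t => 0 < t < 1).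
Proof. intros a b y Ha Hb Hy. unfold Rmin, Rmax in Hy. destruct Rle_dec; lra. Qed.

Lemma open_01 : open (fun t => 0 < t < 1).
Proof. apply open_and; [apply open_gt | apply open_lt]. Qed.

Lemma at_right_0_01 : at_right 0 (fun t => 0 < t < 1).
Proof. exact (at_right_open 0 1 Rlt_0_1). Qed.

Lemma at_left_1_01 : at_left 1 (fun t => 0 < t < 1).
Proof. exact (at_left_open 0 1 Rlt_0_1). Qed.

Lemma opp_ln_pos t : 0 < t < 1 -> 0 < - ln t.
Proof. intros Ht. assert (ln t < 0) by (rewrite <- ln_1; apply ln_increasing; lra). lra. Qed.

Lemma is_RInt_gen_const_01 (K : R) :
  is_RInt_gen (V := R_NormedModule) (fun _ => K) (at_right 0) (at_left 1) K.
Proof.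
  assert (H : is_RInt_gen (V := R_NormedModule) (fun _ => K) (at_right 0) (at_left 1)
                (K * 1 - K * 0)).
  { apply (is_RInt_gen_antiderivative (fun t => K * t) _ _ _ _ is_interval_01 open_01
             at_right_0_01 at_left_1_01).
    - intros y _. split; [auto_derive; [easy | ring] | apply continuous_const].
    - apply (filterlim_at_right_of_continuous (fun t => K * t)), continuous_of_ex_derive.
      auto_derive. easy.
    - apply (filterlim_at_left_of_continuous (fun t => K * t)), continuous_of_ex_derive.
      auto_derive. easy. }
  now replace (K * 1 - K * 0) with K in H by ring.
Qed.

Lemma is_RInt_gen_reflect_01 (f : R -> R) l :
  (forall y, 0 < y < 1 -> continuous f y) ->
  is_RInt_gen f (at_right 0) (at_left 1) l ->
  is_RInt_gen (fun t => f (1 - t)) (at_right 0) (at_left 1) l.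
Proof.
  intros Hc Hf. apply is_RInt_gen_swap in Hf.
  assert (Hd : forall y, 0 < y < 1 -> is_derive (fun t => 1 - t) y (-1) /\
      continuous (fun _ => -1) y /\ continuous f (1 - y)).
  { intros y Hy. split; [auto_derive; [easy | ring] |].
    split; [apply continuous_const | apply Hc; lra]. }
  assert (Hsub := is_RInt_gen_comp (Ga := at_left 1) (Gb := at_right 0)
    f (fun t => 1 - t) (fun _ => -1) _ _ is_interval_01 at_right_0_01 at_left_1_01 Hd
    filterlim_one_minus_right filterlim_one_minus_left Hf).
  apply is_RInt_gen_opp in Hsub. unfold opp at 2 in Hsub; simpl in Hsub.
  rewrite Ropp_involutive in Hsub.
  eapply is_RInt_gen_ext; [|exact Hsub].
  apply filter_forall. intros. unfold opp; simpl. ring.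
Qed.

Lemma is_RInt_gen_Rpower_opp_ln h : 0 <= h <= 1 ->
  is_RInt_gen (fun t => Rpower (- ln t) h) (at_right 0) (at_left 1) (EulerGamma (1 + h)).
Proof.
  intros Hh. assert (HG := is_RInt_gen_swap _ _ (is_RInt_gen_EulerGamma h Hh)).
  assert (Hd : forall y, 0 < y < 1 -> is_derive (fun t => - ln t) y (- / y) /\
      continuous (fun t => - / t) y /\ continuous (gamma_integrand h) (- ln y)).
  { intros y Hy. split; [|split].
    - auto_derive; [lra | field; lra].
    - apply continuous_of_ex_derive. auto_derive. lra.
    - apply continuous_of_ex_derive. unfold gamma_integrand, Rpower. auto_derive.
      now apply opp_ln_pos. }
  assert (Hsub := is_RInt_gen_comp (Ga := Rbar_locally p_infty) (Gb := at_right 0)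
    (gamma_integrand h) (fun t => - ln t) (fun t => - / t) _ _
    is_interval_01 at_right_0_01 at_left_1_01 Hd
    filterlim_opp_ln_0 filterlim_opp_ln_1 HG).
  apply is_RInt_gen_opp in Hsub. unfold opp at 2 in Hsub; simpl in Hsub.
  rewrite Ropp_involutive in Hsub.
  eapply is_RInt_gen_ext; [|exact Hsub].
  generalize (filter_prod_interval _ is_interval_01 at_right_0_01 at_left_1_01).
  apply filter_imp. intros ab Hab y Hy. assert (0 < y < 1) by (apply Hab; lra).
  unfold opp, gamma_integrand; simpl. rewrite Ropp_involutive, exp_ln by lra. field. lra.
Qed.

Lemma is_RInt_gen_Rpower_opp_ln_1m h : 0 <= h <= 1 ->
  is_RInt_gen (fun t => Rpower (- ln (1 - t)) h) (at_right 0) (at_left 1) (EulerGamma (1 + h)).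
Proof.
  intros Hh. apply (is_RInt_gen_reflect_01 (fun t => Rpower (- ln t) h)).
  - intros y Hy. apply continuous_of_ex_derive. unfold Rpower. auto_derive.
    split; [lra | split; [apply opp_ln_pos; lra | easy]].
  - now apply is_RInt_gen_Rpower_opp_ln.
Qed.

Lemma is_RInt_gen_Rpower_neg_01 p : p < 1 ->
  is_RInt_gen (fun t => Rpower t (- p)) (at_right 0) (at_left 1) (/ (1 - p)).
Proof.
  intros Hp. set (F t := Rpower t (1 - p) / (1 - p)).
  assert (HF0 : filterlim F (at_right 0) (locally 0)).
  { replace 0 with (0 / (1 - p)) at 2 by (field; lra).
    apply (filterlim_comp _ _ _ (fun t => Rpower t (1 - p)) (fun u => u / (1 - p)) _ (locally 0));
      [apply filterlim_Rpower_0; lra|].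
    apply (continuous_of_ex_derive (fun u => u / (1 - p))). auto_derive. lra. }
  assert (HF1 : filterlim F (at_left 1) (locally (/ (1 - p)))).
  { replace (/ (1 - p)) with (F 1)
      by (unfold F, Rpower; rewrite ln_1, Rmult_0_r, exp_0; field; lra).
    apply filterlim_at_left_of_continuous, continuous_of_ex_derive.
    unfold F, Rpower. auto_derive. lra. }
  replace (/ (1 - p)) with (/ (1 - p) - 0) by ring.
  apply (is_RInt_gen_antiderivative F _ _ _ _ is_interval_01 open_01
           at_right_0_01 at_left_1_01); [|exact HF0 | exact HF1].
  intros y Hy. split.
  - unfold F, Rpower. auto_derive; [lra|].
    replace ((1 - p) * ln y) with (- p * ln y + ln y) by ring.
    rewrite exp_plus, exp_ln by lra. field. lra.
  - apply continuous_of_ex_derive. unfold Rpower. auto_derive. lra.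
Qed.

Lemma Rpower_le_Rpower_nonpos u v p : 0 < u <= v -> p <= 0 -> Rpower v p <= Rpower u p.
Proof.
  intros Huv Hp. apply exp_le_exp_of_le, Rmult_le_compat_neg_l; [exact Hp|].
  apply ln_le; lra.
Qed.

Lemma ln_2_le_opp_ln t : 0 < t <= / 2 -> ln 2 <= - ln t.
Proof.
  intros Ht. assert (ln t <= ln (/ 2)) by (apply ln_le; lra).
  rewrite ln_Rinv in H by lra. lra.
Qed.

Lemma le_opp_ln_1m t : 0 < t < 1 -> t <= - ln (1 - t).
Proof.
  intros Ht. assert (ln (1 - t) <= ln (exp (- t))).
  { apply ln_le; [lra|]. generalize (exp_ineq1_le (- t)); lra. }
  rewrite ln_exp in H. lra.
Qed.

Definition bigamma_integrand x y t := Rpower (- ln t) (x - 1) * Rpower (- ln (1 - t)) (y - 1).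

(* Near [0] the first factor is at most [(ln 2) ^ (x - 1)] and, since
   [- ln (1 - t) >= t], the second one at most [t ^ (- x)]; symmetrically near [1]. *)
Definition bigamma_majorant x t :=
  Rpower (ln 2) (x - 1) * Rpower t (- x) + Rpower (ln 2) (- x) * Rpower (1 - t) (- (1 - x)).

Lemma bigamma_integrand_le x t : 0 < x < 1 -> 0 < t < 1 ->
  0 <= bigamma_integrand x (1 - x) t <= bigamma_majorant x t.
Proof.
  intros Hx Ht. unfold bigamma_integrand, bigamma_majorant.
  replace (1 - x - 1) with (- x) by ring. replace (- (1 - x)) with (x - 1) by ring.
  assert (Hln2 : 0 < ln 2) by (rewrite <- ln_1; apply ln_increasing; lra).
  assert (Hpos : forall u v p q, 0 < Rpower u p * Rpower v q)
    by (intros; apply Rmult_lt_0_compat; apply exp_pos).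
  split; [left; apply Hpos|].
  assert (H1 := Hpos (ln 2) t (x - 1) (- x)). assert (H2 := Hpos (ln 2) (1 - t) (- x) (x - 1)).
  destruct (Rle_dec t (/ 2)).
  - enough (Rpower (- ln t) (x - 1) * Rpower (- ln (1 - t)) (- x)
            <= Rpower (ln 2) (x - 1) * Rpower t (- x)) by lra.
    apply Rmult_le_compat; try (left; apply exp_pos);
      apply Rpower_le_Rpower_nonpos; try lra; split; try lra.
    + now apply ln_2_le_opp_ln.
    + apply le_opp_ln_1m; lra.
  - enough (Rpower (- ln t) (x - 1) * Rpower (- ln (1 - t)) (- x)
            <= Rpower (ln 2) (- x) * Rpower (1 - t) (x - 1)) by lra.
    rewrite Rmult_comm.
    apply Rmult_le_compat; try (left; apply exp_pos);
      apply Rpower_le_Rpower_nonpos; try lra; split; try lra.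
    + apply ln_2_le_opp_ln; lra.
    + replace t with (1 - (1 - t)) at 2 by ring. apply le_opp_ln_1m; lra.
Qed.

Lemma ex_RInt_gen_bigamma_majorant x : 0 < x < 1 ->
  ex_RInt_gen (bigamma_majorant x) (at_right 0) (at_left 1).
Proof.
  intros Hx.
  assert (H0 := is_RInt_gen_Rpower_neg_01 x ltac:(lra)).
  assert (H1 : is_RInt_gen (fun t => Rpower (1 - t) (- (1 - x))) (at_right 0) (at_left 1)
                 (/ (1 - (1 - x)))).
  { apply (is_RInt_gen_reflect_01 (fun t => Rpower t (- (1 - x)))).
    - intros y Hy. apply continuous_of_ex_derive. unfold Rpower. auto_derive. lra.
    - apply is_RInt_gen_Rpower_neg_01; lra. }
  eexists. exact (is_RInt_gen_plus _ _ _ _ (is_RInt_gen_scal _ (Rpower (ln 2) (x - 1)) _ H0)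
                    (is_RInt_gen_scal _ (Rpower (ln 2) (- x)) _ H1)).
Qed.

Lemma is_RInt_gen_Bigamma x : 0 < x < 1 ->
  is_RInt_gen (bigamma_integrand x (1 - x)) (at_right 0) (at_left 1) (Bigamma x (1 - x)).
Proof.
  intros Hx.
  change (Bigamma x (1 - x))
    with (RInt_gen (bigamma_integrand x (1 - x)) (at_right 0) (at_left 1)).
  apply (RInt_gen_correct (V := R_CompleteNormedModule)).
  apply (ex_RInt_gen_dominated _ (bigamma_majorant x) _ is_interval_01 at_right_0_01
           at_left_1_01); [|now apply ex_RInt_gen_bigamma_majorant].
  intros t Ht. split; [now apply bigamma_integrand_le|].
  assert (0 < - ln t) by now apply opp_ln_pos.
  assert (0 < - ln (1 - t)) by (apply opp_ln_pos; lra).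
  split; apply continuous_of_ex_derive; unfold bigamma_integrand, bigamma_majorant, Rpower;
    auto_derive; replace (1 + - t) with (1 - t) by ring; repeat split; lra.
Qed.

Lemma Rpower_mul_ge_exp_tangent x h c a b : 0 < x < 1 -> 0 < h -> 0 < a -> 0 < b ->
  exp c * (1 - c - ((1 - x) * Rpower a h + x * Rpower b h - 1) / h)
    <= Rpower a (x - 1) * Rpower b (- x).
Proof.
  intros Hx Hh Ha Hb.
  assert (Hln : forall u, 0 < u -> ln u <= (Rpower u h - 1) / h).
  { intros u Hu. apply (Rmult_le_reg_l h); [exact Hh|].
    replace (h * ((Rpower u h - 1) / h)) with (Rpower u h - 1) by (field; lra).
    unfold Rpower. generalize (exp_ineq1_le (h * ln u)). lra. }
  set (s := - ((1 - x) * Rpower a h + x * Rpower b h - 1) / h).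
  assert (Hs : s <= (x - 1) * ln a + - x * ln b).
  { assert (Hs : s = (x - 1) * ((Rpower a h - 1) / h) + - x * ((Rpower b h - 1) / h))
      by (unfold s; field; lra).
    assert (La := Hln a Ha). assert (Lb := Hln b Hb). nra. }
  replace (Rpower a (x - 1) * Rpower b (- x)) with (exp ((x - 1) * ln a + - x * ln b))
    by (unfold Rpower; now rewrite exp_plus).
  eapply Rle_trans; [|apply exp_le_exp_of_le, Hs].
  replace (exp s) with (exp c * exp (s - c)) by (rewrite <- exp_plus; f_equal; ring).
  replace (1 - c - ((1 - x) * Rpower a h + x * Rpower b h - 1) / h) with (1 + (s - c))
    by (unfold s; field; lra).
  apply Rmult_le_compat_l; [left; apply exp_pos | apply exp_ineq1_le].
Qed.

Lemma Bigamma_ge x h c : 0 < x < 1 -> 0 < h <= 1 ->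
  exp c * (1 - c - (EulerGamma (1 + h) - 1) / h) <= Bigamma x (1 - x).
Proof.
  intros Hx Hh. set (G := EulerGamma (1 + h)).
  assert (HA := is_RInt_gen_Rpower_opp_ln h ltac:(lra)).
  assert (HB := is_RInt_gen_Rpower_opp_ln_1m h ltac:(lra)).
  assert (Hlin := is_RInt_gen_minus _ _ _ _
    (is_RInt_gen_minus _ _ _ _ (is_RInt_gen_const_01 (exp c * (1 - c + / h)))
       (is_RInt_gen_scal _ (exp c * (1 - x) / h) _ HA))
    (is_RInt_gen_scal _ (exp c * x / h) _ HB)).
  unfold minus, plus, opp, scal in Hlin; simpl in Hlin; unfold mult in Hlin; simpl in Hlin.
  replace (exp c * (1 - c - (G - 1) / h))
    with (exp c * (1 - c + / h) + - (exp c * (1 - x) / h * G) + - (exp c * x / h * G))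
    by (field; lra).
  refine (is_RInt_gen_le _ _ _ (/ 2) _ _ is_interval_01 at_right_0_01 at_left_1_01 _ _ _ Hlin
           (is_RInt_gen_Bigamma x Hx)).
  - generalize (at_right_open 0 (/ 2) ltac:(lra)). apply filter_imp. intros; lra.
  - generalize (at_left_open (/ 2) 1 ltac:(lra)). apply filter_imp. intros; lra.
  - intros t Ht. unfold bigamma_integrand. replace (1 - x - 1) with (- x) by ring.
    eapply Rle_trans; [|apply Rpower_mul_ge_exp_tangent with (c := c) (h := h);
                        try apply opp_ln_pos; lra].
    right. field. lra.
Qed.

Lemma real_Lim_seq_ge (u : nat -> R) lo hi :
  (forall n, lo <= u n <= hi) -> lo <= real (Lim_seq u).
Proof.
  intros Hu.
  assert (Hlo : Rbar_le (Lim_seq (fun _ => lo)) (Lim_seq u))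
    by (apply Lim_seq_le_loc; exists O; intros; apply Hu).
  assert (Hhi : Rbar_le (Lim_seq u) (Lim_seq (fun _ => hi)))
    by (apply Lim_seq_le_loc; exists O; intros; apply Hu).
  rewrite Lim_seq_const in Hlo, Hhi.
  destruct (Lim_seq u); simpl in *; easy.
Qed.

Lemma Bigamma_ge_exp_opp_diff_quotient x h : 0 < x < 1 -> 0 < h <= 1 ->
  exp (- ((EulerGamma (1 + h) - EulerGamma 1) / h)) <= Bigamma x (1 - x).
Proof.
  intros Hx Hh. rewrite EulerGamma_1.
  set (q := (EulerGamma (1 + h) - 1) / h).
  generalize (Bigamma_ge x h (- q) Hx Hh). fold q.
  now replace (1 - - q - q) with 1 by ring; rewrite Rmult_1_r.
Qed.

Lemma EulerGamma_diff_quotient_le h : 0 < h <= 1 ->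
  (EulerGamma (1 + h) - EulerGamma 1) / h <= 1.
Proof.
  intros Hh. rewrite EulerGamma_1.
  assert (EulerGamma (1 + h) <= 1 + h) by (apply EulerGamma_1p_le; lra).
  apply (Rmult_le_reg_r h); [lra|]. field_simplify; lra.
Qed.

Theorem mainTheorem12 (x : R) (hx0 : 0 < x) (hx1 : x < 1) :
  exp (- Derive EulerGamma 1) <= Bigamma x (1 - x).
Proof.
  set (B := Bigamma x (1 - x)).
  set (q n := (EulerGamma (1 + (0 + / (INR n + 1))) - EulerGamma 1) / (0 + / (INR n + 1))).
  assert (HD : Derive EulerGamma 1 = real (Lim_seq q)) by reflexivity.
  assert (Hh : forall n : nat, 0 < 0 + / (INR n + 1) <= 1).
  { intros n. assert (1 <= INR n + 1) by (generalize (pos_INR n); lra).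
    rewrite Rplus_0_l. split; [apply Rinv_0_lt_compat; lra|].
    rewrite <- Rinv_1. apply Rinv_le_contravar; lra. }
  assert (Hexp : forall n, exp (- q n) <= B)
    by (intros n; exact (Bigamma_ge_exp_opp_diff_quotient x _ (conj hx0 hx1) (Hh n))).
  assert (HB : 0 < B) by (eapply Rlt_le_trans; [apply exp_pos | apply (Hexp O)]).
  assert (Hq : forall n, - ln B <= q n <= 1).
  { intros n. split; [|exact (EulerGamma_diff_quotient_le _ (Hh n))].
    assert (H := ln_le _ _ (exp_pos _) (Hexp n)). rewrite ln_exp in H. lra. }
  rewrite HD, <- (exp_ln B) by exact HB. apply exp_le_exp_of_le.
  assert (Hlim := real_Lim_seq_ge q _ _ Hq). lra.
Qed.
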